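(* Let $IS\in\{\Box,\blacksquare\}^2$ and let $\tau$ be a correct compositional translation from $\mathrm{SYNCSIMPLE}$ into $\mathrm{LOCKSIMPLE}_{2,IS}$ of blocking type $(P_1P_1,P_2P_2)$. Then: (1) the blocking prefix of $\tau(!)$ has the form $R_1P_1wT_2P_1$ with $w\in\{P_2,T_2\}^*$ and $R_1$ some word, and the blocking prefix of $\tau(?)$ has the form $R_3P_2w'T_1P_2$ with $w'\in\{P_1,T_1\}^*$ and $R_3$ some word; (2) $\tau(!)$ has a prefix in $\{T_1,P_1\}^*T_2$, and $\tau(?)$ has a prefix in $\{T_2,P_2\}^*T_1$.
   Context: $\mathrm{SYNCSIMPLE}$: subprocesses $\mathcal{U} ::= \checkmark \mid 0 \mid\, !\mathcal{U} \mid\, ?\mathcal{U}$; processes are finite parallel compositions ($\mid$ associative, commutative, $0$ a unit). Reduction: $!\mathcal{U}_1\mid ?\mathcal{U}_2\mid \mathcal{P}\to \mathcal{U}_1\mid\mathcal{U}_2\mid\mathcal{P}$. Successful: of form $\checkmark\mid\mathcal{P}$; may-convergent: reduces to a successful process; must-convergent: every reachable process is may-convergent. $\mathrm{LOCKSIMPLE}_{k,IS}$ ($IS\in\{\Box,\blacksquare\}^k$, $\Box$ empty, $\blacksquare$ full): subprocesses are words over $\{P_1,T_1,\dots,P_k,T_k\}$ followed by $0$ or $\checkmark$; states $(\mathcal{P},C)$ reduce by $(P_i\mathcal{U}\mid\mathcal{P},C)\to(\mathcal{U}\mid\mathcal{P},C[C_i:=\blacksquare])$ only if $C_i=\Box$,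 and $(T_i\mathcal{U}\mid\mathcal{P},C)\to(\mathcal{U}\mid\mathcal{P},C[C_i:=\Box])$ always. Success = process contains $\checkmark$; a process $\mathcal{P}$ is may/must-convergent iff the state $(\mathcal{P},IS)$ is. A compositional translation $\tau$ is given by words $\tau(!),\tau(?)$ with $\tau(0)=0$, $\tau(\checkmark)=\checkmark$, $\tau(!\mathcal{U})=\tau(!)\tau(\mathcal{U})$, $\tau(?\mathcal{U})=\tau(?)\tau(\mathcal{U})$, $\tau$ commuting with $\mid$; correct = preserves and reflects may- and must-convergence. Blocking prefix/type of a word $S$: execute $S$ alone as a single subprocess from store $IS$; if it gets stuck at an occurrence of $P_i$, the prefix ending with that occurrence is the blocking prefix; the type is $P_i$ if this occurrence is the first symbol from $\{P_i,T_i\}$ in $S$, and $P_iP_i$ otherwise (then the blocking prefix has form $R_1P_iR_2P_i$ with $R_2$ containing no $P_i,T_i$). $\tau$ has blocking type $(W_1,W_2)$ if $\tau(!)$ has type $W_1$ and $\tau(?)$ type $W_2$. $X^*$ denotes finite words over a symbol set $X$. *)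

From Stdlib Require Import List Permutation Relations.
Import ListNotations.

(* An action: true = "!" , false = "?". *)
(* A subprocess  a_1 ... a_n e  with e = true for a final checkmark, false for 0. *)
Definition ssub : Type := (list bool * bool)%type.
Definition sproc : Type := list ssub.   (* parallel composition, up to permutation *)

Inductive sstep : sproc -> sproc -> Prop :=
| sstep_comm : forall (P : sproc) u1 e1 u2 e2 Q,
    Permutation P ((true :: u1, e1) :: (false :: u2, e2) :: Q) ->
    sstep P ((u1, e1) :: (u2, e2) :: Q).

Definition ssuccessful (P : sproc) : Prop := In (@nil bool, true) P.

Definition smay (P : sproc) : Prop :=
  exists P', clos_refl_trans sproc sstep P P' /\ ssuccessful P'.

Definition smust (P : sproc) : Prop :=
  forall P', clos_refl_trans sproc sstep P P' -> smay P'.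

Inductive lock : Type := L1 | L2.

Definition lock_eqb (i j : lock) : bool :=
  match i, j with L1, L1 | L2, L2 => true | _, _ => false end.

(* P i = take lock i, T i = release lock i *)
Inductive sym : Type := P (i : lock) | T (i : lock).

Definition word : Type := list sym.

(* store: C i = true means the lock i is full (black square), false = empty *)
Definition store : Type := lock -> bool.

Definition upd (C : store) (i : lock) (b : bool) : store :=
  fun j => if lock_eqb j i then b else C j.

Definition lsub : Type := (word * bool)%type.  (* e = true : checkmark, false : 0 *)
Definition lproc : Type := list lsub.
Definition lstate : Type := (lproc * store)%type.

Inductive lstep : lstate -> lstate -> Prop :=
| lstep_P : forall (Pr : lproc) (C : store) i u e Q,
    Permutation Pr ((P i :: u, e) :: Q) -> C i = false ->
    lstep (Pr, C) ((u, e) :: Q, upd C i true)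
| lstep_T : forall (Pr : lproc) (C : store) i u e Q,
    Permutation Pr ((T i :: u, e) :: Q) ->
    lstep (Pr, C) ((u, e) :: Q, upd C i false).

Definition lsuccessful (s : lstate) : Prop := In (@nil sym, true) (fst s).

Definition lmay_state (s : lstate) : Prop :=
  exists s', clos_refl_trans lstate lstep s s' /\ lsuccessful s'.

Definition lmust_state (s : lstate) : Prop :=
  forall s', clos_refl_trans lstate lstep s s' -> lmay_state s'.

Definition lmay (IS : store) (Pr : lproc) : Prop := lmay_state (Pr, IS).
Definition lmust (IS : store) (Pr : lproc) : Prop := lmust_state (Pr, IS).

(* tau is given by the two words tau(!) = a and tau(?) = b. *)
Definition tr_sub (a b : word) (U : ssub) : lsub :=
  (flat_map (fun x : bool => if x then a else b) (fst U), snd U).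

Definition tr_proc (a b : word) (Pr : sproc) : lproc := map (tr_sub a b) Pr.

Definition correct (IS : store) (a b : word) : Prop :=
  forall Pr : sproc,
    (smay Pr <-> lmay IS (tr_proc a b Pr)) /\
    (smust Pr <-> lmust IS (tr_proc a b Pr)).

(* Executing a word alone as a single subprocess; None = gets stuck. *)
Fixpoint exec (C : store) (s : word) : option store :=
  match s with
  | [] => Some C
  | P i :: s' => if C i then None else exec (upd C i true) s'
  | T i :: s' => exec (upd C i false) s'
  end.

Definition mentions (i : lock) (x : sym) : bool :=
  match x with P j | T j => lock_eqb i j end.

Definition blocking_prefix (IS : store) (S B : word) : Prop :=
  exists B' i rest C,
    S = B' ++ P i :: rest /\ B = B' ++ [P i] /\
    exec IS B' = Some C /\ C i = true.

(* Blocking types: Single i = "P_i",  Double i = "P_i P_i" *)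
Inductive btype : Type := Single (i : lock) | Double (i : lock).

Definition has_blocking_type (IS : store) (S : word) (t : btype) : Prop :=
  exists B' i rest C,
    S = B' ++ P i :: rest /\ exec IS B' = Some C /\ C i = true /\
    match t with
    | Single j => j = i /\ forallb (fun x => negb (mentions i x)) B' = true
    | Double j => j = i /\ existsb (mentions i) B' = true
    end.

Definition word_over (i : lock) (w : word) : Prop :=
  forall x, In x w -> mentions i x = true.

From Stdlib Require Import List Permutation Relations.
Import ListNotations.

(* Correctness maps the must-convergent process !✓ | ?0 to the must-convergent
   state ([(τ(!), ✓); (τ(?), 0)], IS), so no run of it reaches a deadlock, where
   both threads wait on a held lock.  A word of blocking type P_iP_i blocks from
   every store, because lock i is re-acquired before its final request.  Run
   τ(!) up to the first P_1 of its blocking window, then run τ(?) until it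
   blocks: to avoid a deadlock it must wait on lock 2 with lock 1 free.  Once
   τ(!) takes P_1 both locks are held, and τ(!) can only avoid blocking before
   its second P_1 if the window in between ends by releasing lock 2.  For (2),
   run τ(?) up to its own blocking point, where it waits on the held lock 2;
   if the first use of lock 2 in τ(!) were P_2, τ(!) would block as well. *)

Definition avoids (i : lock) (w : word) : Prop :=
  forall x, In x w -> mentions i x = false.

Lemma avoids_cons i x w : avoids i (x :: w) -> mentions i x = false /\ avoids i w.
Proof. intros H; split; [apply H; left; reflexivity | intros y Hy; apply H; right; exact Hy]. Qed.

Lemma avoids_app_l i u v : avoids i (u ++ v) -> avoids i u.
Proof. intros H x Hx; apply H, in_or_app; left; exact Hx. Qed.

Lemma upd_eq C i b : upd C i b i = b.
Proof. destruct i; reflexivity. Qed.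

Lemma upd_neq C i j b : i <> j -> upd C i b j = C j.
Proof. destruct i, j; unfold upd; simpl; congruence. Qed.

Lemma other_lock (i j k : lock) : i <> j -> k <> i -> k = j.
Proof. destruct i, j, k; congruence. Qed.

Lemma lock_eqb_false (i k : lock) : lock_eqb i k = false -> k <> i.
Proof. intros H ->; destruct i; discriminate. Qed.

Lemma mentions_inv i x : mentions i x = true -> x = P i \/ x = T i.
Proof. destruct i, x as [[]|[]]; simpl; intros H; auto; discriminate. Qed.

Lemma mentions_other i j x : i <> j -> mentions i x = false -> x = P j \/ x = T j.
Proof.
  intros Hij H; destruct x as [k|k]; simpl in H;
    rewrite (other_lock i j k Hij (lock_eqb_false i k H)); auto.
Qed.

Lemma avoids_word_over i j w : i <> j -> avoids j w -> word_over i w.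
Proof.
  intros Hij H x Hx.
  destruct (mentions_other j i x (not_eq_sym Hij) (H x Hx)) as [-> | ->]; destruct i; reflexivity.
Qed.

Lemma exec_app C u v :
  exec C (u ++ v) = match exec C u with Some C' => exec C' v | None => None end.
Proof.
  revert C; induction u as [|[k|k] u IH]; intros C; simpl; auto.
  destruct (C k); auto.
Qed.

Lemma exec_avoids i w C C' : avoids i w -> exec C w = Some C' -> C' i = C i.
Proof.
  revert C; induction w as [|x w IH]; intros C Hav He; simpl in He.
  - congruence.
  - destruct (avoids_cons _ _ _ Hav) as [Hx Hw].
    destruct x as [k|k]; simpl in Hx; [destruct (C k); [discriminate|] |];
      rewrite (IH _ Hw He); apply upd_neq, lock_eqb_false, Hx.
Qed.

Lemma first_mention i w : existsb (mentions i) w = true ->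
  exists w1 x w2, w = w1 ++ x :: w2 /\ avoids i w1 /\ mentions i x = true.
Proof.
  induction w as [|y w IH]; simpl; [discriminate|].
  destruct (mentions i y) eqn:Hy; simpl; intros H.
  - exists [], y, w; split; [reflexivity | split; [intros ? [] | exact Hy]].
  - destruct (IH H) as [w1 [x [w2 [-> [Hw1 Hx]]]]].
    exists (y :: w1), x, w2; split; [reflexivity | split; [|exact Hx]].
    intros z [<- | Hz]; [exact Hy | exact (Hw1 z Hz)].
Qed.

Lemma last_mention i w : existsb (mentions i) w = true ->
  exists w1 x w2, w = w1 ++ x :: w2 /\ mentions i x = true /\ avoids i w2.
Proof.
  induction w as [|y w IH] using rev_ind; simpl; [discriminate|].
  rewrite existsb_app; simpl; rewrite Bool.orb_false_r.
  destruct (mentions i y) eqn:Hy; intros H.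
  - exists w, y, []; split; [reflexivity | split; [exact Hy | intros ? []]].
  - rewrite Bool.orb_false_r in H.
    destruct (IH H) as [w1 [x [w2 [-> [Hx Hw2]]]]].
    exists w1, x, (w2 ++ [y]); split; [rewrite <- app_assoc; reflexivity | split; [exact Hx|]].
    intros z Hz; apply in_app_or in Hz as [Hz | [<- | []]]; [exact (Hw2 z Hz) | exact Hy].
Qed.

Lemma exec_last_acquire C0 C i w :
  existsb (mentions i) w = true -> exec C0 w = Some C -> C i = true ->
  exists w1 w2 D, w = w1 ++ P i :: w2 /\ exec C0 w1 = Some D /\ D i = false /\ avoids i w2.
Proof.
  intros Hm He Hi.
  destruct (last_mention i w Hm) as [w1 [x [w2 [-> [Hx Hw2]]]]].
  rewrite exec_app in He; destruct (exec C0 w1) as [D|] eqn:HD; [|discriminate].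
  destruct (mentions_inv i x Hx) as [-> | ->]; simpl in He.
  - destruct (D i) eqn:Di; [discriminate|].
    exists w1, w2, D; repeat split; auto.
  - rewrite (exec_avoids _ _ _ _ Hw2 He), upd_eq in Hi; discriminate.
Qed.

Lemma exec_double_acquire C i w1 w2 rest :
  avoids i w2 -> exec C (w1 ++ P i :: w2 ++ P i :: rest) = None.
Proof.
  intros Hw2; rewrite exec_app.
  destruct (exec C w1) as [D|]; simpl; [|reflexivity].
  destruct (D i); [reflexivity|].
  rewrite exec_app; destruct (exec (upd D i true) w2) as [D'|] eqn:He; simpl; [|reflexivity].
  rewrite (exec_avoids _ _ _ _ Hw2 He), upd_eq; reflexivity.
Qed.

Lemma double_blocks C0 w i :
  has_blocking_type C0 w (Double i) -> forall C, exec C w = None.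
Proof.
  intros [B' [k [rest [C1 [-> [He [Hk [<- Hm]]]]]]]] C.
  destruct (exec_last_acquire _ _ _ _ Hm He Hk) as [w1 [w2 [D [-> [_ [_ Hw2]]]]]].
  rewrite <- app_assoc; apply exec_double_acquire, Hw2.
Qed.

Lemma blocking_point_unique C B1 B2 k1 k2 r1 r2 C1 C2 :
  B1 ++ P k1 :: r1 = B2 ++ P k2 :: r2 ->
  exec C B1 = Some C1 -> C1 k1 = true ->
  exec C B2 = Some C2 -> C2 k2 = true -> B1 = B2.
Proof.
  revert B2 C; induction B1 as [|x B1 IH]; intros [|y B2] C Heq H1 Hk1 H2 Hk2; simpl in *.
  - reflexivity.
  - injection Heq as <- _; injection H1 as ->; rewrite Hk1 in H2; discriminate.
  - injection Heq as -> _; injection H2 as ->; rewrite Hk2 in H1; discriminate.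
  - injection Heq as <- Heq; f_equal.
    destruct x as [k|k]; [destruct (C k); [discriminate|] |]; eapply IH; eauto.
Qed.

Lemma blocking_prefix_eq C S B B' i rest C' :
  blocking_prefix C S B -> S = B' ++ P i :: rest ->
  exec C B' = Some C' -> C' i = true -> B = B' ++ [P i].
Proof.
  intros [B'' [k [r [C'' [HS [-> [He Hk]]]]]]] -> He' Hi.
  assert (B'' = B') as -> by (eapply blocking_point_unique; eauto).
  apply app_inv_head in HS; injection HS as -> _; reflexivity.
Qed.

Definition reaches (s0 : lstate) (x y : lsub) (C : store) : Prop :=
  exists L, Permutation L [x; y] /\ clos_refl_trans lstate lstep s0 (L, C).

Definition blocked (u : word) (C : store) : Prop :=
  exists k v, u = P k :: v /\ C k = true.

Lemma blocked_cons k v C : C k = true -> blocked (P k :: v) C.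
Proof. intros Hk; exists k, v; split; [reflexivity | exact Hk]. Qed.

Definition deadlock_free (s0 : lstate) : Prop :=
  forall x y C, reaches s0 x y C -> blocked (fst x) C -> blocked (fst y) C -> False.

Section Reaches.

Variable s0 : lstate.

Lemma reaches_swap x y C : reaches s0 x y C -> reaches s0 y x C.
Proof.
  intros [L [HL HR]]; exists L; split; [|exact HR].
  eapply Permutation_trans; [exact HL | apply perm_swap].
Qed.

Lemma reaches_P k u e y C :
  reaches s0 (P k :: u, e) y C -> C k = false -> reaches s0 (u, e) y (upd C k true).
Proof.
  intros [L [HL HR]] Hk; exists [(u, e); y]; split; [apply Permutation_refl|].
  eapply rt_trans; [exact HR | apply rt_step; eapply lstep_P; eassumption].
Qed.

Lemma reaches_T k u e y C :
  reaches s0 (T k :: u, e) y C -> reaches s0 (u, e) y (upd C k false).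
Proof.
  intros [L [HL HR]]; exists [(u, e); y]; split; [apply Permutation_refl|].
  eapply rt_trans; [exact HR | apply rt_step; eapply lstep_T; eassumption].
Qed.

Lemma reaches_exec w u e y C C' :
  reaches s0 (w ++ u, e) y C -> exec C w = Some C' -> reaches s0 (u, e) y C'.
Proof.
  revert C; induction w as [|[k|k] w IH]; intros C Hr He; simpl in *.
  - injection He as <-; exact Hr.
  - destruct (C k) eqn:Hk; [discriminate|]; exact (IH _ (reaches_P _ _ _ _ _ Hr Hk) He).
  - exact (IH _ (reaches_T _ _ _ _ _ Hr) He).
Qed.

Lemma reaches_block x v e C :
  reaches s0 x (v, e) C -> exec C v = None ->
  exists k v' C', reaches s0 x (P k :: v', e) C' /\ C' k = true.
Proof.
  revert C; induction v as [|[k|k] v IH]; intros C Hr He; simpl in He.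
  - discriminate.
  - destruct (C k) eqn:Hk; [exists k, v, C; auto|].
    apply (IH (upd C k true)); [|exact He].
    apply reaches_swap, reaches_P, Hk; apply reaches_swap, Hr.
  - apply (IH (upd C k false)); [|exact He].
    apply reaches_swap, reaches_T, reaches_swap, Hr.
Qed.

End Reaches.

Lemma clos_rt_irreducible {A} (R : relation A) s s' :
  (forall t, ~ R s t) -> clos_refl_trans A R s s' -> s' = s.
Proof.
  intros Hirr H; apply clos_rt_rt1n in H.
  destruct H as [|t u Hst _]; [reflexivity | destruct (Hirr _ Hst)].
Qed.

Lemma blocked_pair_irreducible L x y C s :
  Permutation L [x; y] -> blocked (fst x) C -> blocked (fst y) C -> ~ lstep (L, C) s.
Proof.
  intros HL [k [u [Hx Hk]]] [l [v [Hy Hl]]] Hs.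
  destruct x as [xu xe], y as [yu ye]; simpl in Hx, Hy; subst xu yu.
  inversion Hs as [L' C' m w e Q HP Hm | L' C' m w e Q HP]; subst;
    assert (Hin := Permutation_in _ (Permutation_trans (Permutation_sym HP) HL) (in_eq _ _));
    destruct Hin as [Hin | [Hin | []]]; injection Hin; intros; subst; congruence.
Qed.

Lemma lmust_deadlock_free s0 : lmust_state s0 -> deadlock_free s0.
Proof.
  intros Hm x y C [L [HL HR]] Hx Hy.
  destruct (Hm _ HR) as [s' [Hs' Hsucc]].
  rewrite (clos_rt_irreducible _ _ _ (fun t => blocked_pair_irreducible L x y C t HL Hx Hy) Hs')
    in Hsucc; unfold lsuccessful in Hsucc; simpl in Hsucc.
  apply (Permutation_in _ HL) in Hsucc.
  destruct Hx as [? [? [Hx _]]], Hy as [? [? [Hy _]]].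
  destruct Hsucc as [Hs | [Hs | []]]; subst; discriminate.
Qed.

Definition sync_pair : sproc := [([true], true); ([false], false)].

Lemma sstep_keeps_success Q Q' : sstep Q Q' -> ssuccessful Q -> ssuccessful Q'.
Proof.
  intros [Q0 u1 e1 u2 e2 R HQ] Hs.
  apply (Permutation_in _ HQ) in Hs as [Hs | [Hs | Hs]]; try discriminate.
  right; right; exact Hs.
Qed.

Lemma sstep_sync_pair Q Q' : sstep Q Q' -> Permutation Q sync_pair -> ssuccessful Q'.
Proof.
  intros [Q0 u1 e1 u2 e2 R HR] HQ.
  assert (Hin := Permutation_in _ (Permutation_trans (Permutation_sym HR) HQ) (in_eq _ _)).
  destruct Hin as [Hin | [Hin | []]]; injection Hin; intros; subst; [left; reflexivity | discriminate].
Qed.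

Lemma sync_pair_reachable Q :
  clos_refl_trans sproc sstep sync_pair Q -> Permutation Q sync_pair \/ ssuccessful Q.
Proof.
  intros H; apply clos_rt_rtn1 in H.
  induction H as [|Q Q' Hs _ IH]; [left; apply Permutation_refl|].
  right; destruct IH as [HQ | HQ];
    [exact (sstep_sync_pair _ _ Hs HQ) | exact (sstep_keeps_success _ _ Hs HQ)].
Qed.

Lemma smust_sync_pair : smust sync_pair.
Proof.
  intros Q HQ; destruct (sync_pair_reachable Q HQ) as [Hp | Hs].
  - exists [([], true); ([], false)]; split; [|left; reflexivity].
    apply rt_step; exact (sstep_comm Q [] true [] false [] Hp).
  - exists Q; split; [apply rt_refl | exact Hs].
Qed.

Lemma correct_lmust_pair IS a b : correct IS a b -> lmust IS [(a, true); (b, false)].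
Proof.
  intros Hc; destruct (Hc sync_pair) as [_ [Hmust _]].
  specialize (Hmust smust_sync_pair).
  unfold tr_proc, tr_sub in Hmust; simpl in Hmust; rewrite !app_nil_r in Hmust; exact Hmust.
Qed.

Section DeadlockFree.

Variable s0 : lstate.
Hypothesis free : deadlock_free s0.

Lemma acquire_needs_release j u rest e1 v e2 C :
  reaches s0 (u ++ P j :: rest, e1) (P j :: v, e2) C -> C j = true -> avoids j u -> False.
Proof.
  revert C; induction u as [|x u IH]; intros C Hr Hj Hav; simpl in Hr.
  - exact (free _ _ _ Hr (blocked_cons _ _ _ Hj) (blocked_cons _ _ _ Hj)).
  - destruct (avoids_cons _ _ _ Hav) as [Hx Hu].
    destruct x as [k|k]; simpl in Hx; apply lock_eqb_false in Hx.
    + destruct (C k) eqn:Hk.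
      * exact (free _ _ _ Hr (blocked_cons _ _ _ Hk) (blocked_cons _ _ _ Hj)).
      * apply (IH _ (reaches_P _ _ _ _ _ _ Hr Hk)); [rewrite upd_neq; auto | exact Hu].
    + apply (IH _ (reaches_T _ _ _ _ _ _ Hr)); [rewrite upd_neq; auto | exact Hu].
Qed.

Variables i j : lock.
Hypothesis Hij : i <> j.

Lemma partner_blocks_on_other u e1 v e2 D :
  reaches s0 (P i :: u, e1) (v, e2) D -> D i = false -> exec D v = None ->
  exists v' C, reaches s0 (u, e1) (P j :: v', e2) C /\ C i = true /\ C j = true.
Proof.
  intros Hr Hi Hv.
  destruct (reaches_block _ _ _ _ _ Hr Hv) as [k [v' [C [Hr' Hk]]]].
  destruct (C i) eqn:Ci.
  { destruct (free _ _ _ Hr' (blocked_cons _ _ _ Ci) (blocked_cons _ _ _ Hk)). }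
  assert (k = j) as ->.
  { apply (other_lock i j k Hij); intros ->; congruence. }
  exists v', (upd C i true); split; [exact (reaches_P _ _ _ _ _ _ Hr' Ci)|].
  split; [apply upd_eq | rewrite upd_neq; auto].
Qed.

Lemma reacquire_needs_release u rest e1 v e2 C :
  reaches s0 (u ++ P i :: rest, e1) (P j :: v, e2) C -> C i = true -> avoids i u ->
  (u = [] /\ C j = false) \/ exists w, u = w ++ [T j].
Proof.
  revert C; induction u as [|x u IH]; intros C Hr Hi Hav; simpl in Hr.
  - left; split; [reflexivity|].
    destruct (C j) eqn:Cj; [|reflexivity].
    destruct (free _ _ _ Hr (blocked_cons _ _ _ Hi) (blocked_cons _ _ _ Cj)).
  - right; destruct (avoids_cons _ _ _ Hav) as [Hx Hu].
    destruct (mentions_other i j x Hij Hx) as [-> | ->].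
    + destruct (C j) eqn:Cj.
      { destruct (free _ _ _ Hr (blocked_cons _ _ _ Cj) (blocked_cons _ _ _ Cj)). }
      destruct (IH _ (reaches_P _ _ _ _ _ _ Hr Cj)) as [[_ Hc] | [w ->]];
        [rewrite upd_neq; auto | exact Hu | rewrite upd_eq in Hc; discriminate |].
      exists (P j :: w); reflexivity.
    + destruct (IH _ (reaches_T _ _ _ _ _ _ Hr)) as [[-> _] | [w ->]];
        [rewrite upd_neq; auto | exact Hu | exists [] | exists (T j :: w)]; reflexivity.
Qed.

Lemma double_window_ends_with_release a b e1 e2 IS X1 X2 rest D :
  reaches s0 (a, e1) (b, e2) IS -> (forall C, exec C b = None) ->
  a = X1 ++ P i :: X2 ++ P i :: rest -> exec IS X1 = Some D -> D i = false -> avoids i X2 ->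
  exists w, X2 = w ++ [T j].
Proof.
  intros Hr Hb -> HD Hi HX2.
  destruct (partner_blocks_on_other _ _ _ _ _ (reaches_exec _ _ _ _ _ _ _ Hr HD) Hi (Hb D))
    as [v' [C [Hr' [Ci Cj]]]].
  destruct (reacquire_needs_release _ _ _ _ _ _ Hr' Ci HX2) as [[_ Cj'] | Hw];
    [congruence | exact Hw].
Qed.

Lemma first_use_is_release a b e1 e2 IS B' r E :
  reaches s0 (a, e1) (b, e2) IS -> b = B' ++ P j :: r -> exec IS B' = Some E -> E j = true ->
  In (T j) a -> exists u rest, word_over i u /\ a = u ++ T j :: rest.
Proof.
  intros Hr -> HE Ej HTj.
  assert (Hm : existsb (mentions j) a = true).
  { apply existsb_exists; exists (T j); split; [exact HTj | destruct j; reflexivity]. }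
  destruct (first_mention j a Hm) as [u [x [rest [-> [Hu Hx]]]]].
  destruct (mentions_inv j x Hx) as [-> | ->].
  - exfalso; apply (acquire_needs_release j u rest e1 r e2 E); [|exact Ej | exact Hu].
    exact (reaches_swap _ _ _ _ (reaches_exec _ _ _ _ _ _ _ (reaches_swap _ _ _ _ Hr) HE)).
  - exists u, rest; split; [exact (avoids_word_over _ _ _ Hij Hu) | reflexivity].
Qed.

Lemma double_blocking_shape a b e1 e2 IS :
  reaches s0 (a, e1) (b, e2) IS ->
  has_blocking_type IS a (Double i) -> has_blocking_type IS b (Double j) ->
  (forall B, blocking_prefix IS a B ->
     exists R w, word_over j w /\ B = R ++ P i :: w ++ [T j; P i]) /\
  (exists u rest, word_over i u /\ a = u ++ T j :: rest).
Proof.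
  intros Hr Ha Hb.
  destruct Ha as [B' [k [rest [C [Ha [HC [Ci [<- Hm]]]]]]]].
  destruct (exec_last_acquire _ _ _ _ Hm HC Ci) as [X1 [X2 [D [-> [HD [Di HX2]]]]]].
  assert (Ha' : a = X1 ++ P i :: X2 ++ P i :: rest) by (rewrite Ha, <- app_assoc; reflexivity).
  destruct (double_window_ends_with_release _ _ _ _ _ _ _ _ _ Hr (double_blocks _ _ _ Hb)
              Ha' HD Di HX2) as [w ->].
  split.
  - intros B HB; exists X1, w; split.
    + exact (avoids_word_over _ _ _ (not_eq_sym Hij) (avoids_app_l _ _ _ HX2)).
    + rewrite (blocking_prefix_eq _ _ _ _ _ _ _ HB Ha HC Ci), <- app_assoc; simpl.
      rewrite <- app_assoc; reflexivity.
  - destruct Hb as [B'' [k' [r [E [Hb [HE [Ej [<- _]]]]]]]].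
    apply (first_use_is_release _ _ _ _ _ _ _ _ Hr Hb HE Ej).
    rewrite Ha'; apply in_or_app; right; right; apply in_or_app; left; apply in_elt.
Qed.

End DeadlockFree.

Theorem lemma5p2 (IS : store) (a b : word) :
  correct IS a b ->
  has_blocking_type IS a (Double L1) ->
  has_blocking_type IS b (Double L2) ->
  ((forall B, blocking_prefix IS a B ->
      exists R1 w, word_over L2 w /\ B = R1 ++ P L1 :: w ++ [T L2; P L1]) /\
   (forall B, blocking_prefix IS b B ->
      exists R3 w', word_over L1 w' /\ B = R3 ++ P L2 :: w' ++ [T L1; P L2])) /\
  ((exists u rest, word_over L1 u /\ a = u ++ T L2 :: rest) /\
   (exists u rest, word_over L2 u /\ b = u ++ T L1 :: rest)).
Proof.
  intros Hc Ha Hb.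
  set (s0 := ([(a, true); (b, false)], IS)).
  assert (free : deadlock_free s0) by exact (lmust_deadlock_free _ (correct_lmust_pair _ _ _ Hc)).
  assert (Hstart : reaches s0 (a, true) (b, false) IS)
    by (exists [(a, true); (b, false)]; split; [apply Permutation_refl | apply rt_refl]).
  destruct (double_blocking_shape s0 free L1 L2 ltac:(discriminate) _ _ _ _ _ Hstart Ha Hb)
    as [HaB Ha2].
  destruct (double_blocking_shape s0 free L2 L1 ltac:(discriminate) _ _ _ _ _
              (reaches_swap _ _ _ _ Hstart) Hb Ha) as [HbB Hb2].
  split; split; assumption.
Qed.
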